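(* For $1\le i\le N$ and every holomorphic $V_\tau$-valued function $f$ on $\Omega$, $$L(x)\bigl(\mathcal{U}_i-1-\kappa\gamma\bigr)\bigl(L^{-1}f\bigr)(x)=x_i\partial_if(x)-\kappa\sum_{j<i}\frac{x_i}{x_i-x_j}\bigl(\sigma^M(i,j)f\bigr)(x)-\kappa\sum_{j>i}\frac{x_j}{x_i-x_j}\bigl(\sigma^M(i,j)f\bigr)(x).$$
   Context: Setup: $\tau$ is a partition of $N$ (not $(N)$, $(1^N)$) identified with the irreducible orthogonal representation of $\mathcal{S}_N$ on $V_\tau\cong\mathbb{C}^{n_\tau}$ (orthonormal basis), $\tau(i,j):=\tau((i,j))$. $c(i,T)=(\text{column of }i)-(\text{row of }i)$ in a standard tableau $T$, $S_1(\tau)=\sum_ic(i,T)$, $\gamma=S_1(\tau)/N$. $\mathcal{S}_N$ acts on $x$ by $(xw)_i=x_{w(i)}$. $\mathbb{C}^N_{reg}=\{x\in(\mathbb{C}\setminus\{0\})^N:x_i\neq x_j,\ i\ne j\}$; $\Omega\subset\mathbb{C}^N_{reg}$ is open with $\Omega w=\Omega$ for all $w$. $L:\Omega\to GL_{n_\tau}(\mathbb{C})$ is holomorphic and satisfies $\partial_iL(x)=\kappa L(x)\bigl\{\sum_{j\ne i}\frac{\tau(i,j)}{x_i-x_j}-\frac{\gamma}{x_i}I\bigr\}$, $1\le i\le N$ ($\kappa\in\mathbb{R}$). $M:\mathcal{S}_N\times\Omega\to GL_{n_\tau}(\mathbb{C})$ is locally constant in $x$ with $M(I,x)=I$, $M(w_1w_2,x)=M(w_2,xw_1)M(w_1,x)$,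 and $L(xw)=M(w,x)L(x)\tau(w)$. $(\sigma^M(w)f)(x)=M(w,x)^{-1}f(xw)$. The operators $\mathcal{D}_i g(x)=\partial_ig(x)+\kappa\sum_{j\ne i}\tau(i,j)\frac{g(x)-g(x(i,j))}{x_i-x_j}$ and $\mathcal{U}_ig(x)=\mathcal{D}_i(x_ig)(x)-\kappa\sum_{j<i}\tau(i,j)g(x(i,j))$ are applied to holomorphic $V_\tau$-valued functions $g$ on $\Omega$. *)

From HB Require Import structures.
From mathcomp Require Import all_boot all_order all_algebra all_fingroup.
From Stdlib Require Import ClassicalEpsilon.
Set Implicit Arguments. Unset Strict Implicit. Unset Printing Implicit Defensive.
Import Order.TTheory GRing.Theory Num.Theory.
Local Open Scope ring_scope.

(* Points of C^N are functions 'I_N -> C (coordinates indexed 0..N-1). *)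

Definition xact (C : numClosedFieldType) (N : nat) (x : 'I_N -> C)
  (w : {perm 'I_N}) : 'I_N -> C := fun i => x (w i).

(* paper's product w1 w2 = w1 \o w2 (mathcomp's (w2 * w1)%g) *)
Definition permcomp (N : nat) (w1 w2 : {perm 'I_N}) : {perm 'I_N} := (w2 * w1)%g.

Definition shift (C : numClosedFieldType) (N : nat) (x : 'I_N -> C)
  (i : 'I_N) (t : C) : 'I_N -> C := fun k => if k == i then x k + t else x k.

Definition has_pderiv (C : numClosedFieldType) (N : nat) (h : ('I_N -> C) -> C)
  (i : 'I_N) (x : 'I_N -> C) (d : C) : Prop :=
  forall eps : C, 0 < eps -> exists2 delta : C, 0 < delta &
    forall t : C, (0 < `|t|) && (`|t| < delta) ->
      `|(h (shift x i t) - h x) / t - d| <= eps.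

Definition pderiv (C : numClosedFieldType) (N : nat) (h : ('I_N -> C) -> C)
  (i : 'I_N) (x : 'I_N -> C) : C :=
  epsilon (inhabits 0) (has_pderiv h i x).

Definition pderivM (C : numClosedFieldType) (N p q : nat)
  (g : ('I_N -> C) -> 'M[C]_(p, q)) (i : 'I_N) (x : 'I_N -> C) : 'M[C]_(p, q) :=
  \matrix_(a < p, b < q) pderiv (fun y => g y a b) i x.

Definition holo_at (C : numClosedFieldType) (N : nat) (h : ('I_N -> C) -> C)
  (x : 'I_N -> C) : Prop :=
  exists d : 'I_N -> C, forall eps : C, 0 < eps -> exists2 delta : C, 0 < delta &
    forall y : 'I_N -> C, (forall k, `|y k - x k| < delta) ->
      `|h y - h x - \sum_k (y k - x k) * d k| <= eps * \sum_k `|y k - x k|.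

Definition holoM (C : numClosedFieldType) (N p q : nat)
  (Omega : ('I_N -> C) -> Prop) (g : ('I_N -> C) -> 'M[C]_(p, q)) : Prop :=
  forall x, Omega x -> forall a b, holo_at (fun y => g y a b) x.

Definition is_open (C : numClosedFieldType) (N : nat) (Omega : ('I_N -> C) -> Prop) : Prop :=
  forall x, Omega x -> exists2 delta : C, 0 < delta &
    forall y, (forall k, `|y k - x k| < delta) -> Omega y.

Definition regular (C : numClosedFieldType) (N : nat) (x : 'I_N -> C) : Prop :=
  (forall k, x k != 0) /\ (forall k l, k != l -> x k != x l).

Definition is_partition (N : nat) (lam : seq nat) : bool :=
  [&& sorted geq lam, all (fun m => 0 < m)%N lam & sumn lam == N].

(* cell (row r, column c), 0-indexed *)
Definition in_shape (lam : seq nat) (r c : nat) : bool :=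
  (r < size lam)%N && (c < nth 0%N lam r)%N.

(* a tableau: entry k (0..N-1) sits at cell (row, column) = T k *)
Definition tableau (N : nat) := {ffun 'I_N -> 'I_N * 'I_N}.

Definition is_SYT (N : nat) (lam : seq nat) (T : tableau N) : bool :=
  [&& [forall k, in_shape lam (T k).1 (T k).2],
      injectiveb T,
      [forall r : 'I_N, forall c : 'I_N, in_shape lam r c ==> [exists k, T k == (r, c)]] &
      [forall k, forall l,
         ((T k).1 <= (T l).1)%N ==> ((T k).2 <= (T l).2)%N ==> (k <= l)%N]].

Definition content (C : numClosedFieldType) (N : nat) (T : tableau N) (k : 'I_N) : C :=
  ((T k).2 : nat)%:R - ((T k).1 : nat)%:R.

(* S_1 = sum of the contents of all cells (= sum_k c(k,T) for any SYT T) *)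
Definition S1 (lam : seq nat) : int :=
  \sum_(r < size lam) \sum_(c < nth 0%N lam r) (c%:Z - r%:Z).

Definition gamma (C : numClosedFieldType) (N : nat) (lam : seq nat) : C :=
  (S1 lam)%:~R / N%:R.

Definition is_rep (C : numClosedFieldType) (N n : nat)
  (tau : {perm 'I_N} -> 'M[C]_n) : Prop :=
  tau 1%g = 1%:M /\ forall w1 w2, tau (permcomp w1 w2) = tau w1 *m tau w2.

(* tau is Young's orthogonal form of the partition lam, in the orthonormal
   basis of C^n indexed (via e) by the standard tableaux of shape lam *)
Definition young_rep (C : numClosedFieldType) (N n : nat) (lam : seq nat)
  (tau : {perm 'I_N} -> 'M[C]_n) : Prop :=
  exists e : 'I_n -> tableau N,
    injective e /\ (forall T, is_SYT lam T <-> exists a, e a = T) /\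
    forall (k k1 : 'I_N), (k1 : nat) = (k : nat).+1 -> forall a : 'I_n,
      let rho := content C (e a) k1 - content C (e a) k in
      tau (tperm k k1) *m delta_mx a (ord0 : 'I_1) =
        rho^-1 *: delta_mx a (ord0 : 'I_1)
        + sqrtC (1 - rho ^- 2) *:
            \sum_(b | e b == [ffun m => e a (tperm k k1 m)]) delta_mx b (ord0 : 'I_1).

Definition Dop (C : numClosedFieldType) (N n : nat) (kappa : C)
  (tau : {perm 'I_N} -> 'M[C]_n) (g : ('I_N -> C) -> 'cV[C]_n)
  (i : 'I_N) (x : 'I_N -> C) : 'cV[C]_n :=
  pderivM g i x
  + kappa *: \sum_(j | j != i)
      (x i - x j)^-1 *: (tau (tperm i j) *m (g x - g (xact x (tperm i j)))).

Definition Uop (C : numClosedFieldType) (N n : nat) (kappa : C)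
  (tau : {perm 'I_N} -> 'M[C]_n) (g : ('I_N -> C) -> 'cV[C]_n)
  (i : 'I_N) (x : 'I_N -> C) : 'cV[C]_n :=
  Dop kappa tau (fun y => y i *: g y) i x
  - kappa *: \sum_(j : 'I_N | (j < i)%N) tau (tperm i j) *m g (xact x (tperm i j)).

Definition sigmaM (C : numClosedFieldType) (N n : nat)
  (M : {perm 'I_N} -> ('I_N -> C) -> 'M[C]_n) (w : {perm 'I_N})
  (f : ('I_N -> C) -> 'cV[C]_n) (x : 'I_N -> C) : 'cV[C]_n :=
  invmx (M w x) *m f (xact x w).

(* Write g = L^-1 f.  The differential equation for L gives
   d_i (L^-1) = -kappa (sum_(j <> i) tau(i,j)/(x_i - x_j) - gamma/x_i) L^-1, so in
   L (U_i - 1 - kappa gamma) g the terms produced by differentiating L^-1 cancel the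
   unreflected half of the difference quotients of D_i (x_i g), and x_i (gamma/x_i)
   = gamma cancels the constant.  By the equivariance L (x w) = M(w,x) L(x) tau(w),
   each reflected term tau(i,j) g(x (i,j)) equals L(x)^-1 sigma^M(i,j) f (x), and
   x_j/(x_i - x_j) + 1 = x_i/(x_i - x_j) merges the j < i part of D_i with the extra
   sum in U_i. *)

From Pilot Require Import Defs.
From HB Require Import structures.
From mathcomp Require Import all_boot all_order all_algebra all_fingroup.
From mathcomp Require Import topology normedtype ring.
From Stdlib Require Import ClassicalEpsilon.
Import Order.TTheory GRing.Theory Num.Theory.
Import numFieldNormedType.Exports.
Local Open Scope classical_set_scope.
Local Open Scope ring_scope.
Set Implicit Arguments. Unset Strict Implicit. Unset Printing Implicit Defensive.

Section EntrywiseLimits.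
Variable C : numClosedFieldType.

Lemma cvg_dnbhs0_eq (phi psi : C -> C) (l : C) :
  (forall t, t != 0 -> phi t = psi t) ->
  phi t @[t --> (0 : C)^'] --> l -> psi t @[t --> (0 : C)^'] --> l.
Proof.
move=> phi_psi; apply: cvg_trans; apply: near_eq_cvg.
by near=> t; apply: phi_psi; near: t; exact: nbhs_dnbhs_neq.
Unshelve. all: by end_near.
Qed.

Definition mx_cvg0 p q (Phi : C -> 'M[C]_(p, q)) (D : 'M[C]_(p, q)) :=
  forall a b, Phi t a b @[t --> (0 : C)^'] --> D a b.

Lemma mx_cvg0_near p q (Phi Psi : C -> 'M[C]_(p, q)) D :
  (\forall t \near (0 : C)^', Phi t = Psi t) -> mx_cvg0 Phi D -> mx_cvg0 Psi D.
Proof.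
move=> Phi_Psi cvgPhi a b; apply: cvg_trans (cvgPhi a b); apply: near_eq_cvg.
by apply: filterS Phi_Psi => t ->.
Qed.

Lemma mx_cvg0_eq p q (Phi Psi : C -> 'M[C]_(p, q)) D :
  (forall t, t != 0 -> Phi t = Psi t) -> mx_cvg0 Phi D -> mx_cvg0 Psi D.
Proof.
move=> Phi_Psi; apply: mx_cvg0_near.
by near=> t; apply: Phi_Psi; near: t; exact: nbhs_dnbhs_neq.
Unshelve. all: by end_near.
Qed.

Lemma mx_cvg0_cst p q (D : 'M[C]_(p, q)) : mx_cvg0 (fun=> D) D.
Proof. by move=> a b; exact: cvg_cst. Qed.

Lemma mx_cvg0D p q (A B : C -> 'M[C]_(p, q)) A0 B0 :
  mx_cvg0 A A0 -> mx_cvg0 B B0 -> mx_cvg0 (fun t => A t + B t) (A0 + B0).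
Proof.
move=> cvgA cvgB a b; rewrite mxE.
by under eq_cvg do rewrite mxE; exact: cvgD.
Qed.

Lemma mx_cvg0N p q (A : C -> 'M[C]_(p, q)) A0 :
  mx_cvg0 A A0 -> mx_cvg0 (fun t => - A t) (- A0).
Proof.
move=> cvgA a b; rewrite mxE.
by under eq_cvg do rewrite mxE; exact: cvgN.
Qed.

Lemma mx_cvg0Z p q (s : C -> C) (c : C) (A : C -> 'M[C]_(p, q)) A0 :
  s t @[t --> (0 : C)^'] --> c -> mx_cvg0 A A0 ->
  mx_cvg0 (fun t => s t *: A t) (c *: A0).
Proof.
move=> cvgs cvgA a b; rewrite mxE.
by under eq_cvg do rewrite mxE; exact: cvgM.
Qed.

Lemma mx_cvg0M p q r (A : C -> 'M[C]_(p, q)) (B : C -> 'M[C]_(q, r)) A0 B0 :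
  mx_cvg0 A A0 -> mx_cvg0 B B0 -> mx_cvg0 (fun t => A t *m B t) (A0 *m B0).
Proof.
move=> cvgA cvgB a b; rewrite mxE.
under eq_cvg do rewrite mxE.
apply: cvg_big => [|k _]; first exact: add_continuous.
exact: cvgM.
Qed.

Lemma cvg0_det n (A : C -> 'M[C]_n) A0 :
  mx_cvg0 A A0 -> \det (A t) @[t --> (0 : C)^'] --> \det A0.
Proof.
move=> cvgA; apply: cvg_big => [|s _]; first exact: add_continuous.
apply: cvgM; first exact: cvg_cst.
apply: cvg_big => [|k _]; first exact: mul_continuous.
exact: cvgA.
Qed.

Lemma mx_cvg0_adj n (A : C -> 'M[C]_n) A0 :
  mx_cvg0 A A0 -> mx_cvg0 (fun t => \adj (A t)) (\adj A0).
Proof.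
move=> cvgA a b; rewrite mxE.
under eq_cvg do rewrite mxE.
apply: cvgM; first exact: cvg_cst.
apply: cvg0_det => c d; rewrite !mxE.
by under eq_cvg do rewrite !mxE; exact: cvgA.
Qed.

Lemma mx_cvg0_invmx n (A : C -> 'M[C]_n) A0 :
  A0 \in unitmx -> (\forall t \near (0 : C)^', A t \in unitmx) ->
  mx_cvg0 A A0 -> mx_cvg0 (fun t => invmx (A t)) (invmx A0).
Proof.
move=> unitA0 unitA cvgA; rewrite {2}/invmx unitA0.
apply: (mx_cvg0_near (Phi := fun t => (\det (A t))^-1 *: \adj (A t))).
  by apply: filterS unitA => t unitAt; rewrite /invmx unitAt.
apply: mx_cvg0Z (mx_cvg0_adj cvgA); apply: cvgV (cvg0_det cvgA).
by rewrite -unitfE -unitmxE.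
Qed.

End EntrywiseLimits.

(* Otherwise [D] is implicit: it is determined by the unfolded conclusion. *)
Arguments mx_cvg0_cst {C p q} D.

Section PartialDerivatives.
Variables (C : numClosedFieldType) (N : nat).
Implicit Types (x : 'I_N -> C) (i : 'I_N).

Lemma shiftE x i t k : Defs.shift x i t k - x k = (k == i)%:R * t.
Proof.
by rewrite /Defs.shift; case: (k == i); rewrite ?mul1r ?mul0r (addrAC, subrr) ?subrr ?add0r.
Qed.

Lemma has_pderivP (h : ('I_N -> C) -> C) i x d : has_pderiv h i x d <->
  (h (Defs.shift x i t) - h x) / t @[t --> (0 : C)^'] --> d.
Proof.
split=> [hd | /cvgrPdist_le hd eps eps_gt0].
- apply/cvgrPdist_le => eps /hd[delta delta_gt0 hdelta].
  apply/nbhs_ballP; exists delta => // t /= t_delta t_neq0; rewrite distrC.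
  by apply: hdelta; rewrite normr_gt0 t_neq0 -(normrN t) -(sub0r t).
- have /nbhs_ballP[delta delta_gt0 hdelta] := hd eps eps_gt0.
  exists delta => // t /andP[t_gt0 t_delta]; rewrite distrC; apply: hdelta.
    by rewrite /ball /= sub0r normrN.
  by rewrite -normr_gt0.
Qed.

Lemma pderiv_eq (h : ('I_N -> C) -> C) i x d : has_pderiv h i x d -> pderiv h i x = d.
Proof.
move=> hd; have hpd : has_pderiv h i x (pderiv h i x).
  by apply: epsilon_spec; exists d.
move/has_pderivP: hd; move/has_pderivP: hpd.
by move=> /cvg_unique u /u; apply; exact: norm_hausdorff.
Qed.

Lemma holo_at_has_pderiv (h : ('I_N -> C) -> C) i x :
  holo_at h x -> has_pderiv h i x (pderiv h i x).
Proof.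
case=> d hd; suff hdi : has_pderiv h i x (d i) by rewrite (pderiv_eq hdi).
move=> eps /hd[delta delta_gt0 hdelta]; exists delta => // t /andP[t_gt0 t_delta].
have t_neq0 : t != 0 by rewrite -normr_gt0.
have lin : \sum_k (Defs.shift x i t k - x k) * d k = t * d i.
  rewrite (bigD1 i) //= big1 => [|k /negbTE k_neq_i]; rewrite shiftE ?eqxx ?k_neq_i.
    by rewrite mul1r addr0.
  by rewrite !mul0r.
have dist : \sum_k `|Defs.shift x i t k - x k| = `|t|.
  rewrite (bigD1 i) //= big1 => [|k /negbTE k_neq_i]; rewrite shiftE ?eqxx ?k_neq_i.
    by rewrite mul1r addr0.
  by rewrite mul0r normr0.
have near_x : forall k, `|Defs.shift x i t k - x k| < delta.
  by move=> k; rewrite shiftE; case: (k == i); rewrite ?mul1r ?mul0r ?normr0.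
have := hdelta _ near_x; rewrite lin dist.
rewrite -[_ / t - _](mulfK t_neq0) mulrBl divfK // [d i * t]mulrC.
by rewrite normrM normrV ?unitfE // ler_pdivrMr.
Qed.

Definition has_pderivM p q (F : ('I_N -> C) -> 'M[C]_(p, q)) i x (D : 'M[C]_(p, q)) :=
  mx_cvg0 (fun t => t^-1 *: (F (Defs.shift x i t) - F x)) D.

Lemma pderivM_eq p q (F : ('I_N -> C) -> 'M[C]_(p, q)) i x D :
  has_pderivM F i x D -> pderivM F i x = D.
Proof.
move=> dF; apply/matrixP => a b; rewrite mxE; apply/pderiv_eq/has_pderivP.
by have := dF a b; under eq_cvg do rewrite !mxE mulrC.
Qed.

Lemma holoM_has_pderivM p q Omega (F : ('I_N -> C) -> 'M[C]_(p, q)) i x :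
  holoM Omega F -> Omega x -> has_pderivM F i x (pderivM F i x).
Proof.
move=> holoF Ox a b; rewrite mxE.
have /has_pderivP := holo_at_has_pderiv i (holoF x Ox a b).
by apply: cvg_dnbhs0_eq => t _; rewrite !mxE mulrC.
Qed.

Lemma has_pderivM_cvg p q (F : ('I_N -> C) -> 'M[C]_(p, q)) i x D :
  has_pderivM F i x D -> mx_cvg0 (fun t => F (Defs.shift x i t)) (F x).
Proof.
move=> dF; have cvg_t : t @[t --> (0 : C)^'] --> (0 : C) by exact: cvg_within.
have := mx_cvg0D (mx_cvg0_cst (F x)) (mx_cvg0Z cvg_t dF).
rewrite scale0r addr0; apply: mx_cvg0_eq => t t_neq0.
by rewrite scalerA mulfV // scale1r addrC subrK.
Qed.

Lemma has_pderivMM p q r (A : ('I_N -> C) -> 'M[C]_(p, q))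
    (B : ('I_N -> C) -> 'M[C]_(q, r)) i x dA dB :
  has_pderivM A i x dA -> has_pderivM B i x dB ->
  has_pderivM (fun y => A y *m B y) i x (dA *m B x + A x *m dB).
Proof.
move=> dA_A dB_B.
have := mx_cvg0D (mx_cvg0M (has_pderivM_cvg dA_A) dB_B) (mx_cvg0M dA_A (mx_cvg0_cst (B x))).
rewrite addrC; apply: mx_cvg0_eq => t _.
by rewrite -scalemxAl -scalemxAr -scalerDr mulmxBl mulmxBr addrA subrK.
Qed.

Lemma has_pderivM_coordZ p q (F : ('I_N -> C) -> 'M[C]_(p, q)) i x dF :
  has_pderivM F i x dF -> has_pderivM (fun y => y i *: F y) i x (x i *: dF + F x).
Proof.
move=> dF_F.
apply: (mx_cvg0_eq _ (mx_cvg0D (mx_cvg0Z (cvg_cst (x i)) dF_F) (has_pderivM_cvg dF_F))).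
move=> t t_neq0; have -> : Defs.shift x i t i = x i + t by rewrite /Defs.shift eqxx.
by apply/matrixP => a b; rewrite !mxE; field.
Qed.

Lemma has_pderivM_invmx n (F : ('I_N -> C) -> 'M[C]_n) i x dF :
  F x \in unitmx -> (\forall t \near (0 : C)^', F (Defs.shift x i t) \in unitmx) ->
  has_pderivM F i x dF ->
  has_pderivM (fun y => invmx (F y)) i x (- (invmx (F x) *m dF *m invmx (F x))).
Proof.
move=> unitFx unitF dF_F.
have cvg_invF := mx_cvg0_invmx unitFx unitF (has_pderivM_cvg dF_F).
apply: (mx_cvg0_near _ (mx_cvg0N (mx_cvg0M (mx_cvg0M cvg_invF dF_F)
                                            (mx_cvg0_cst (invmx (F x)))))).
apply: filterS unitF => t unitFt.
rewrite -scalemxAr -scalemxAl -scalerN; congr (_ *: _).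
by rewrite mulmxBr mulVmx // mulmxBl mul1mx -mulmxA mulmxV // mulmx1 opprB.
Qed.

Lemma is_open_near_shift Omega x i : is_open Omega -> Omega x ->
  \forall t \near (0 : C)^', Omega (Defs.shift x i t).
Proof.
move=> openO Ox; apply: nbhs_dnbhs; have [delta delta_gt0 hdelta] := openO x Ox.
apply/nbhs_ballP; exists delta => // t /= t_delta; apply: hdelta => k.
rewrite shiftE; case: (k == i); rewrite ?mul1r ?mul0r ?normr0 //.
by move: t_delta; rewrite /ball /= sub0r normrN.
Qed.

End PartialDerivatives.

Lemma sum_ratio_split (K : fieldType) (V : lmodType K) N (x : 'I_N -> K) (i : 'I_N)
    (v : 'I_N -> V) :
  (forall j, j != i -> x i - x j != 0) ->
  \sum_(j | j != i) (x j / (x i - x j)) *: v j + \sum_(j : 'I_N | (j < i)%N) v j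
  = \sum_(j : 'I_N | (j < i)%N) (x i / (x i - x j)) *: v j
    + \sum_(j : 'I_N | (i < j)%N) (x j / (x i - x j)) *: v j.
Proof.
move=> xij_neq0; rewrite (bigID (fun j : 'I_N => (j < i)%N)) /= addrAC.
have neq_lt j : (j != i) && (j < i)%N = (j < i)%N.
  by apply/andb_idl => ji; rewrite -val_eqE ltn_eqF.
have neq_ge j : (j != i) && ~~ (j < i)%N = (i < j)%N.
  by rewrite -val_eqE -leqNgt ltn_neqAle eq_sym.
rewrite (eq_bigl _ _ neq_lt) (eq_bigl _ _ neq_ge) -big_split /=; congr (_ + _).
apply: eq_bigr => j ji; have j_neq_i : j != i by rewrite neq_ltn ji.
by rewrite -{2}[v j]scale1r -scalerDl; congr (_ *: _); field; exact: xij_neq0.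
Qed.

Lemma pderivM_coordZ_invmx_mul (C : numClosedFieldType) N n (Omega : ('I_N -> C) -> Prop)
    (L : ('I_N -> C) -> 'M[C]_n) (f : ('I_N -> C) -> 'cV[C]_n) i x :
  is_open Omega -> holoM Omega L -> holoM Omega f ->
  (forall y, Omega y -> L y \in unitmx) -> Omega x ->
  pderivM (fun y => y i *: (invmx (L y) *m f y)) i x =
  x i *: (- (invmx (L x) *m pderivM L i x *m invmx (L x)) *m f x
          + invmx (L x) *m pderivM f i x) + invmx (L x) *m f x.
Proof.
move=> openO holoL holof unitL Ox.
apply/pderivM_eq/has_pderivM_coordZ/has_pderivMM; last exact: holoM_has_pderivM holof Ox.
have unitL_near : \forall t \near (0 : C)^', L (Defs.shift x i t) \in unitmx.
  exact: filterS (fun t => unitL _) (is_open_near_shift i openO Ox).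
exact: has_pderivM_invmx (unitL x Ox) unitL_near (holoM_has_pderivM (i := i) holoL Ox).
Qed.

Lemma tau_invmx_act (C : numClosedFieldType) N n (tau : {perm 'I_N} -> 'M[C]_n)
    (M : {perm 'I_N} -> ('I_N -> C) -> 'M[C]_n) (L : ('I_N -> C) -> 'M[C]_n)
    (f : ('I_N -> C) -> 'cV[C]_n) w x :
  L (xact x w) = M w x *m L x *m tau w ->
  L x \in unitmx -> L (xact x w) \in unitmx -> M w x \in unitmx ->
  tau w *m (invmx (L (xact x w)) *m f (xact x w)) = invmx (L x) *m sigmaM M w f x.
Proof.
move=> equivL unitLx unitLw unitM; apply: (canRL (mulKmx unitLx)).
have L_tau : L x *m tau w = invmx (M w x) *m L (xact x w).
  by rewrite equivL -!mulmxA mulKmx.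
by rewrite mulmxA L_tau -mulmxA mulKVmx.
Qed.

Lemma Uop_invmx_mul (C : numClosedFieldType) N n (tau : {perm 'I_N} -> 'M[C]_n)
    (kappa g : C) (Omega : ('I_N -> C) -> Prop) (L : ('I_N -> C) -> 'M[C]_n)
    (M : {perm 'I_N} -> ('I_N -> C) -> 'M[C]_n) (f : ('I_N -> C) -> 'cV[C]_n) i x :
  is_open Omega -> holoM Omega L -> holoM Omega f ->
  (forall y, Omega y -> L y \in unitmx) -> Omega x -> x i != 0 ->
  pderivM L i x = kappa *: (L x *m (\sum_(j | j != i) (x i - x j)^-1 *: tau (tperm i j)
                                     - (g / x i) *: 1%:M)) ->
  (forall w, L (xact x w) \in unitmx) -> (forall w, M w x \in unitmx) ->
  (forall w, L (xact x w) = M w x *m L x *m tau w) ->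
  Uop kappa tau (fun y => invmx (L y) *m f y) i x - (1 + kappa * g) *: (invmx (L x) *m f x)
  = invmx (L x) *m (x i *: pderivM f i x
      - kappa *: (\sum_(j | j != i) (x j / (x i - x j)) *: sigmaM M (tperm i j) f x
                  + \sum_(j : 'I_N | (j < i)%N) sigmaM M (tperm i j) f x)).
Proof.
move=> openO holoL holof unitL Ox xi_neq0 dL unitLw unitM equivL.
rewrite /Uop /Dop (pderivM_coordZ_invmx_mul i openO holoL holof unitL Ox) dL.
set G0 := invmx (L x); set u := G0 *m f x.
set T := \sum_(j | j != i) (x i - x j)^-1 *: tau (tperm i j).
set S1 := \sum_(j | j != i) (x j / (x i - x j)) *: sigmaM M (tperm i j) f x.
set S2 := \sum_(j : 'I_N | (j < i)%N) sigmaM M (tperm i j) f x.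
have sigma_j j : tau (tperm i j) *m (invmx (L (xact x (tperm i j))) *m f (xact x (tperm i j)))
    = G0 *m sigmaM M (tperm i j) f x.
  exact: tau_invmx_act (equivL _) (unitL x Ox) (unitLw _) (unitM _).
have connection : G0 *m (kappa *: (L x *m (T - (g / x i) *: 1%:M))) *m G0 *m f x
    = kappa *: (T *m u - (g / x i) *: u).
  rewrite -scalemxAr -!scalemxAl !mulmxA mulVmx ?unitL // mul1mx.
  by rewrite !mulmxBl scalemx1 mul_scalar_mx -scalemxAl -mulmxA.
have dunkl : \sum_(j | j != i) (x i - x j)^-1 *: (tau (tperm i j) *m (x i *: u
      - xact x (tperm i j) i *: (invmx (L (xact x (tperm i j))) *m f (xact x (tperm i j)))))
    = x i *: (T *m u) - G0 *m S1.
  rewrite /T /S1 mulmx_suml mulmx_sumr !scaler_sumr -sumrB; apply: eq_bigr => j _.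
  have -> : xact x (tperm i j) i = x j by rewrite /xact tpermL.
  rewrite mulmxBr -scalemxAr -scalemxAr sigma_j -scalemxAl -scalemxAr scalerBr !scalerA.
  by rewrite [_ * x i]mulrC [_ * x j]mulrC.
have lower : \sum_(j : 'I_N | (j < i)%N) tau (tperm i j) *m (invmx (L (xact x (tperm i j)))
      *m f (xact x (tperm i j))) = G0 *m S2.
  by rewrite /S2 mulmx_sumr; apply: eq_bigr => j _; rewrite sigma_j.
rewrite mulNmx {}connection {}dunkl {}lower mulmxBr -!scalemxAr mulmxDr.
move: (T *m u) (G0 *m pderivM f i x) (G0 *m S1) (G0 *m S2) => Tu v w1 w2; clearbody u.
by apply/matrixP => a b; rewrite !mxE; field.
Qed.

Theorem proposition4 (C : numClosedFieldType) (N n : nat) (lam : seq nat)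
  (tau : {perm 'I_N} -> 'M[C]_n) (kappa : C)
  (Omega : ('I_N -> C) -> Prop) (L : ('I_N -> C) -> 'M[C]_n)
  (M : {perm 'I_N} -> ('I_N -> C) -> 'M[C]_n) :
  is_partition N lam -> lam != [:: N] -> lam != nseq N 1%N ->
  is_rep tau -> young_rep lam tau ->
  kappa \is Num.real ->
  is_open Omega -> (forall x, Omega x -> regular x) ->
  (forall w x, Omega x <-> Omega (xact x w)) ->
  holoM Omega L -> (forall x, Omega x -> L x \in unitmx) ->
  (forall x i, Omega x ->
     pderivM L i x =
       kappa *: (L x *m (\sum_(j | j != i) (x i - x j)^-1 *: tau (tperm i j)
                         - (gamma C N lam / x i) *: 1%:M))) ->
  (forall w x, Omega x -> M w x \in unitmx) ->
  (forall w x, Omega x -> exists2 delta : C, 0 < delta &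
     forall y, Omega y -> (forall k, `|y k - x k| < delta) -> M w y = M w x) ->
  (forall x, Omega x -> M 1%g x = 1%:M) ->
  (forall w1 w2 x, Omega x -> M (permcomp w1 w2) x = M w2 (xact x w1) *m M w1 x) ->
  (forall w x, Omega x -> L (xact x w) = M w x *m L x *m tau w) ->
  forall (i : 'I_N) (f : ('I_N -> C) -> 'cV[C]_n), holoM Omega f ->
  forall x, Omega x ->
    L x *m (Uop kappa tau (fun y => invmx (L y) *m f y) i x
            - (1 + kappa * gamma C N lam) *: (invmx (L x) *m f x))
    = x i *: pderivM f i x
      - kappa *: \sum_(j : 'I_N | (j < i)%N) (x i / (x i - x j)) *: sigmaM M (tperm i j) f x
      - kappa *: \sum_(j : 'I_N | (i < j)%N) (x j / (x i - x j)) *: sigmaM M (tperm i j) f x.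
Proof.
move=> _ _ _ _ _ _ openO regO symO holoL unitL dL unitM _ _ _ equivL i f holof x Ox.
have [x_neq0 x_inj] := regO x Ox.
have unitLw w : L (xact x w) \in unitmx by exact/unitL/(symO w x).1.
rewrite (Uop_invmx_mul openO holoL holof unitL Ox (x_neq0 i) (dL x i Ox) unitLw
           (fun w => unitM w x Ox) (fun w => equivL w x Ox)).
rewrite mulKVmx ?unitL // sum_ratio_split ?scalerDr ?opprD ?addrA //.
by move=> j j_neq_i; rewrite subr_eq0 eq_sym x_inj.
Qed.
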